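(* Let $\mathcal A$ be a $C^*$-algebra with identity $1$, let $\delta\colon\mathcal A\to\mathcal A$ be a $^*$-endomorphism, and let $\delta_*$ be a non-degenerate transfer operator for $(\mathcal A,\delta)$. Then: 1) $\delta_*(1)$ is an orthogonal projection lying in the center of $\mathcal A$; 2) $\delta_*(\mathcal A)=\delta_*(1)\mathcal A$; 3) the restriction of $\delta$ to $\delta_*(\mathcal A)$ is a $^*$-isomorphism of $\delta_*(\mathcal A)$ onto $\delta(\mathcal A)$, and the restriction of $\delta_*$ to $\delta(\mathcal A)$ is a $^*$-isomorphism of $\delta(\mathcal A)$ onto $\delta_*(\mathcal A)$, namely the inverse of the former.
   Context: A transfer operator for $(\mathcal A,\delta)$ is a continuous positive linear map $\delta_*\colon\mathcal A\to\mathcal A$ such that $\delta_*(\delta(a)b)=a\,\delta_*(b)$ for all $a,b\in\mathcal A$. A transfer operator $\delta_*$ is called non-degenerate if $\delta(\delta_*(1))=\delta(1)$ (equivalently, $\delta\circ\delta_*\circ\delta=\delta$, or equivalently $\delta\circ\delta_*$ is a conditional expectation onto $\delta(\mathcal A)$). *)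

From HB Require Import structures.
From mathcomp Require Import all_boot all_order all_algebra.
From mathcomp Require Import reals complex.
Set Implicit Arguments. Unset Strict Implicit. Unset Printing Implicit Defensive.
Import Order.TTheory GRing.Theory Num.Theory.
Local Open Scope ring_scope.
Local Open Scope complex_scope.

Section CStar.
Variables (R : realType) (A : algType R[i]) (star : A -> A) (nrm : A -> R).

Record is_unital_Cstar_algebra : Prop := {
  star_add : forall a b, star (a + b) = star a + star b;
  star_scale : forall (c : R[i]) a, star (c *: a) = c^* *: star a;
  star_mul : forall a b, star (a * b) = star b * star a;
  star_invol : forall a, star (star a) = a;
  nrm_ge0 : forall a, 0 <= nrm a;
  nrm_eq0 : forall a, nrm a = 0 -> a = 0;
  nrm_triangle : forall a b, nrm (a + b) <= nrm a + nrm b;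
  nrm_scale : forall (c : R[i]) a, (nrm (c *: a))%:C = `|c| * (nrm a)%:C;
  nrm_submul : forall a b, nrm (a * b) <= nrm a * nrm b;
  nrm_Cstar : forall a, nrm (star a * a) = nrm a ^+ 2;
  nrm_complete : forall u : nat -> A,
    (forall e : R, 0 < e -> exists N, forall m n, (N <= m)%N -> (N <= n)%N ->
        nrm (u m - u n) < e) ->
    exists l : A, forall e : R, 0 < e -> exists N, forall n, (N <= n)%N ->
        nrm (u n - l) < e
}.

Definition invertible (a : A) : Prop := exists b, a * b = 1 /\ b * a = 1.

Definition in_spectrum (a : A) (l : R[i]) : Prop := ~ invertible (a - l%:A).

Definition positive (a : A) : Prop :=
  star a = a /\ forall l : R[i], in_spectrum a l -> 0 <= l.

Definition linear_map (T : A -> A) : Prop :=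
  forall (c : R[i]) a b, T (c *: a + b) = c *: T a + T b.

Definition continuous_map (T : A -> A) : Prop :=
  forall a (e : R), 0 < e -> exists d : R, 0 < d /\
    forall b, nrm (b - a) < d -> nrm (T b - T a) < e.

Definition positive_map (T : A -> A) : Prop :=
  forall a, positive a -> positive (T a).

(* *-endomorphism (not required to be unital) *)
Definition star_endomorphism (delta : A -> A) : Prop :=
  [/\ linear_map delta,
      forall a b, delta (a * b) = delta a * delta b &
      forall a, delta (star a) = star (delta a)].

Definition transfer_operator (delta dstar : A -> A) : Prop :=
  [/\ linear_map dstar, continuous_map dstar, positive_map dstar &
      forall a b, dstar (delta a * b) = a * dstar b].

Definition nondegenerate_transfer_operator (delta dstar : A -> A) : Prop :=
  transfer_operator delta dstar /\ delta (dstar 1) = delta 1.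

End CStar.

Definition image_of {T U : Type} (f : T -> U) (y : U) : Prop := exists x, y = f x.

From HB Require Import structures.
From mathcomp Require Import all_boot all_order all_algebra.
From mathcomp Require Import reals complex.
Set Implicit Arguments. Unset Strict Implicit. Unset Printing Implicit Defensive.
Import Order.TTheory GRing.Theory Num.Theory.
Local Open Scope ring_scope.

(* No analysis is needed, only the algebraic axioms.  The kernel of delta annihilates the
   range of dstar, since k * dstar b = dstar (delta k * b).  Non-degeneracy
   puts dstar 1 - 1 and (dstar 1 - 1) * x in that kernel, so p := dstar 1 is a
   left unit on the range of dstar and x * p = p * x * p for every x; applying
   the involution makes p self-adjoint and central.  Then dstar (delta a) = a p
   and delta (dstar (delta a)) = delta (p a) = delta a, so delta and dstar are
   mutually inverse between p A and delta(A). *)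

Section Involution.
Variables (A : pzRingType) (star : A -> A).
Hypotheses (starD : {morph star : x y / x + y})
  (starM : forall a b, star (a * b) = star b * star a) (starK : involutive star).

Lemma starB : {morph star : x y / x - y}.
Proof. by move=> x y; rewrite -{2}(subrK y x) (starD (x - y)) addrK. Qed.

Lemma star0 : star 0 = 0.
Proof. by have := starB 0 0; rewrite !subrr. Qed.

Lemma star1 : star 1 = 1.
Proof. by rewrite -[LHS]mulr1 -{2}(starK 1) -starM mulr1 starK. Qed.

End Involution.

Lemma linear_mapB (R : realType) (A : algType R[i]) (T : A -> A) :
  linear_map T -> {morph T : x y / x - y}.
Proof. by move=> linT x y; rewrite addrC -scaleN1r linT scaleN1r addrC. Qed.

Section TransferOperator.
Variables (A : pzRingType) (delta dstar : A -> A).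
Hypotheses (deltaB : {morph delta : x y / x - y})
  (deltaM : {morph delta : x y / x * y})
  (dstar_transfer : forall a b, dstar (delta a * b) = a * dstar b)
  (dstar_nondeg : delta (dstar 1) = delta 1).

Lemma dstar0 : dstar 0 = 0.
Proof. by have := dstar_transfer 0 0; rewrite !mulr0 mul0r. Qed.

Lemma dstar_delta a : dstar (delta a) = a * dstar 1.
Proof. by rewrite -dstar_transfer mulr1. Qed.

Lemma kernel_mul_dstar k b : delta k = 0 -> k * dstar b = 0.
Proof. by move=> dk; rewrite -dstar_transfer dk mul0r dstar0. Qed.

Lemma delta_dstar1_sub1 : delta (dstar 1 - 1) = 0.
Proof. by rewrite deltaB dstar_nondeg subrr. Qed.

Lemma delta_mul_dstar1 x : delta (dstar 1 * x) = delta x.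
Proof. by rewrite deltaM dstar_nondeg -deltaM mul1r. Qed.

Lemma mul_dstar1_dstar b : dstar 1 * dstar b = dstar b.
Proof.
have := kernel_mul_dstar b delta_dstar1_sub1.
by rewrite mulrBl mul1r => /subr0_eq.
Qed.

Lemma dstar1_idem : dstar 1 * dstar 1 = dstar 1.
Proof. exact: mul_dstar1_dstar. Qed.

Lemma mul_dstar1_sandwich x : x * dstar 1 = dstar 1 * x * dstar 1.
Proof.
have ker : delta ((dstar 1 - 1) * x) = 0 by rewrite deltaM delta_dstar1_sub1 mul0r.
have := kernel_mul_dstar 1 ker.
by rewrite !mulrBl mul1r => /subr0_eq ->.
Qed.

Variable star : A -> A.
Hypotheses (starD : {morph star : x y / x + y})
  (starM : forall a b, star (a * b) = star b * star a) (starK : involutive star)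
  (delta_star : forall a, delta (star a) = star (delta a)).

Lemma star_dstar1 : star (dstar 1) = dstar 1.
Proof.
have ker : delta (star (dstar 1 - 1)) = 0.
  by rewrite delta_star delta_dstar1_sub1 (star0 starD).
have adj : star (dstar 1) * dstar 1 = dstar 1.
  have := kernel_mul_dstar 1 ker.
  by rewrite (starB starD) (star1 starM starK) mulrBl mul1r => /subr0_eq.
by rewrite -{1}adj starM starK adj.
Qed.

Lemma dstar1_central a : dstar 1 * a = a * dstar 1.
Proof.
have := congr1 star (mul_dstar1_sandwich (star a)).
rewrite !starM star_dstar1 !starK => sandwich_adj.
by rewrite mul_dstar1_sandwich -mulrA -sandwich_adj.
Qed.

Lemma image_dstarP x : image_of dstar x <-> exists a, x = dstar 1 * a.
Proof.
split=> [[b ->]|[a ->]]; first by exists (dstar b); rewrite mul_dstar1_dstar.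
by exists (delta a); rewrite dstar_delta dstar1_central.
Qed.

Lemma dstar_deltaK x : image_of dstar x -> dstar (delta x) = x.
Proof. by move=> [b ->]; rewrite dstar_delta -dstar1_central mul_dstar1_dstar. Qed.

Lemma delta_dstarK y : image_of delta y -> delta (dstar y) = y.
Proof. by move=> [a ->]; rewrite dstar_delta -dstar1_central delta_mul_dstar1. Qed.

Lemma dstar_mul_image_delta y1 y2 : image_of delta y1 -> image_of delta y2 ->
  dstar (y1 * y2) = dstar y1 * dstar y2.
Proof.
move=> [a ->] [b ->]; rewrite dstar_transfer !dstar_delta.
by rewrite -mulrA [dstar 1 * _]dstar1_central -mulrA dstar1_idem mulrA.
Qed.

Lemma dstar_star_image_delta y : image_of delta y -> dstar (star y) = star (dstar y).
Proof.
by move=> [a ->]; rewrite -delta_star !dstar_delta starM star_dstar1 dstar1_central.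
Qed.

End TransferOperator.

Theorem proposition4 (R : realType) (A : algType R[i]) (star : A -> A) (nrm : A -> R)
  (HA : is_unital_Cstar_algebra star nrm)
  (delta dstar : A -> A)
  (Hdelta : star_endomorphism star delta)
  (Hdstar : nondegenerate_transfer_operator star nrm delta dstar) :
  (* 1) dstar 1 is an orthogonal projection in the center of A *)
  [/\ dstar 1 * dstar 1 = dstar 1 /\ star (dstar 1) = dstar 1
      /\ (forall a, dstar 1 * a = a * dstar 1),
  (* 2) dstar(A) = dstar(1) A *)
      (forall x, image_of dstar x <-> exists a, x = dstar 1 * a) &
  (* 3) delta restricted to dstar(A) is a *-isomorphism onto delta(A)
        (it is a *-homomorphism since delta is), and dstar restricted
        to delta(A) is a *-isomorphism onto dstar(A), its inverse *)
      ((forall x y, image_of dstar x -> image_of dstar y ->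
             delta x = delta y -> x = y) /\
          (forall y, image_of delta y -> exists x, image_of dstar x /\ delta x = y) /\
          (forall y1 y2, image_of delta y1 -> image_of delta y2 ->
             dstar (y1 * y2) = dstar y1 * dstar y2) /\
          (forall y, image_of delta y -> dstar (star y) = star (dstar y)) /\
          (forall y1 y2, image_of delta y1 -> image_of delta y2 ->
             dstar y1 = dstar y2 -> y1 = y2) /\
          (forall x, image_of dstar x -> exists y, image_of delta y /\ dstar y = x) /\
          (forall x, image_of dstar x -> dstar (delta x) = x) /\
          (forall y, image_of delta y -> delta (dstar y) = y))].
Proof.
case: Hdelta => /linear_mapB deltaB deltaM delta_star.
case: Hdstar => [[_ _ _ transfer] nondeg].
move: (star_add HA) (star_mul HA) (star_invol HA) => starD starM starK.
have dstar_deltaK x : image_of dstar x -> dstar (delta x) = x by apply: dstar_deltaK.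
have delta_dstarK y : image_of delta y -> delta (dstar y) = y by apply: delta_dstarK.
split; [split; [exact: dstar1_idem | split] | |].
- exact: star_dstar1.
- exact: dstar1_central.
- exact: image_dstarP.
split=> [x y /dstar_deltaK {2}<- /dstar_deltaK {2}<- -> //|].
split=> [y dy|]; first by exists (dstar y); split; [exists y | exact: delta_dstarK].
split; first exact: dstar_mul_image_delta.
split; first exact: dstar_star_image_delta.
split=> [y1 y2 /delta_dstarK {2}<- /delta_dstarK {2}<- -> //|].
split=> [x dx|]; first by exists (delta x); split; [exists x | exact: dstar_deltaK].
by split.
Qed.
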